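(* Fix an integer $q \geq 3$ and a real $r \in [0,1]$. Then the function $F(t) = \left(c_q^{t}\, c_{q-1}^{1-t}\right)^{1/(q+t-r)}$ is decreasing on $t \in [0,1]$.
   Context: For integers $q \geq 1$, $c_q := \sqrt{\lfloor (q+2)^2/4 \rfloor}$. *)

From Stdlib Require Import Reals Lra Lia.
Open Scope R_scope.

Definition cq (q : nat) : R := sqrt (INR (((q + 2) * (q + 2)) / 4)%nat).

(* F(t) = (c_q^t * c_{q-1}^{1-t})^{1/(q+t-r)}, real powers via Rpower
   (bases are positive since c_k >= 1). *)
Definition Fqr (q : nat) (r t : R) : R :=
  Rpower (Rpower (cq q) t * Rpower (cq (q - 1)) (1 - t)) (1 / (INR q + t - r)).

From Stdlib Require Import Reals Lra Lia.
Open Scope R_scope.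

(* Write M = c_q^2 = floor((q+2)^2/4) and N = c_{q-1}^2 = floor((q+1)^2/4).
   The logarithm of F(t) is (ln N + t (ln M - ln N)) / (2 (q - r + t)), a ratio
   of affine functions of t; it decreases exactly when
   (q - r) (ln M - ln N) < ln N, so it suffices that q ln (M/N) < ln N.
   Since M - N = floor((q+2)/2) and 4N >= q (q+2), we get
   q ln (M/N) < q (M - N)/N <= 2 <= ln N as soon as N >= 9, i.e. q >= 5;
   for q = 3, 4 the inequality is the integer one M^q < N^(q+1). *)

Definition quarter_sq (n : nat) : nat := (n * n / 4)%nat.

Lemma quarter_sq_even k : quarter_sq (2 * k) = (k * k)%nat.
Proof.
unfold quarter_sq.
replace (2 * k * (2 * k))%nat with (k * k * 4)%nat by ring.
now rewrite Nat.div_mul.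
Qed.

Lemma quarter_sq_odd k : quarter_sq (2 * k + 1) = (k * k + k)%nat.
Proof.
unfold quarter_sq.
replace ((2 * k + 1) * (2 * k + 1))%nat with (1 + (k * k + k) * 4)%nat by ring.
now rewrite Nat.div_add.
Qed.

Lemma quarter_sq_lower n : (n * n <= 4 * quarter_sq n + 1)%nat.
Proof.
destruct (Nat.Even_or_Odd n) as [[k ->] | [k ->]].
- rewrite quarter_sq_even; lia.
- rewrite quarter_sq_odd; lia.
Qed.

Lemma quarter_sq_succ n : quarter_sq (n + 1) = (quarter_sq n + (n + 1) / 2)%nat.
Proof.
destruct (Nat.Even_or_Odd n) as [[k ->] | [k ->]].
- rewrite quarter_sq_even, quarter_sq_odd.
  replace (2 * k + 1)%nat with (1 + k * 2)%nat by ring.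
  rewrite Nat.div_add; simpl; lia.
- replace (2 * k + 1 + 1)%nat with (2 * (k + 1))%nat by ring.
  rewrite quarter_sq_even, quarter_sq_odd.
  replace (2 * (k + 1))%nat with ((k + 1) * 2)%nat by ring.
  rewrite Nat.div_mul; lia.
Qed.

Lemma quarter_sq_lt_succ n : (1 <= n)%nat -> (quarter_sq n < quarter_sq (n + 1))%nat.
Proof.
intros Hn; rewrite quarter_sq_succ.
assert (1 <= (n + 1) / 2)%nat by (apply Nat.div_le_lower_bound; lia).
lia.
Qed.

Lemma quarter_sq_pos n : (2 <= n)%nat -> 0 < INR (quarter_sq n).
Proof.
intros Hn; apply lt_0_INR.
pose proof (quarter_sq_lower n); nia.
Qed.

Lemma ln_sqrt x : 0 < x -> ln (sqrt x) = ln x / 2.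
Proof.
intros Hx.
rewrite <- (sqrt_sqrt x) at 2 by lra.
rewrite ln_mult by (apply sqrt_lt_R0; exact Hx).
field.
Qed.

Lemma ln_sub_lt_ratio M N : 0 < N < M -> ln M - ln N < (M - N) / N.
Proof.
intros [HN HNM].
assert (Hgap : ln M - ln N <> 0).
{ pose proof (ln_increasing N M HN HNM); lra. }
pose proof (exp_ineq1 _ Hgap) as Hexp.
unfold Rminus at 2 in Hexp.
rewrite exp_plus, exp_Ropp, !exp_ln in Hexp by lra.
apply (Rmult_lt_reg_r N); [exact HN |].
replace ((M - N) / N * N) with (M - N) by (field; lra).
apply (Rmult_lt_compat_r N) in Hexp; [| exact HN].
replace (M * / N * N) with M in Hexp by (field; lra).
lra.
Qed.

Lemma two_le_ln N : 9 <= N -> 2 <= ln N.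
Proof.
intros HN.
apply Rnot_lt_le; intros Hlt.
rewrite <- (ln_exp 2) in Hlt.
apply ln_lt_inv in Hlt; [| lra | apply exp_pos].
replace 2 with (1 + 1) in Hlt by ring.
rewrite exp_plus in Hlt.
pose proof exp_le_3; pose proof (exp_pos 1).
nra.
Qed.

Lemma ln_gap_of_pow_lt M N k :
  0 < M -> 0 < N -> M ^ k < N ^ (k + 1) -> INR k * (ln M - ln N) < ln N.
Proof.
intros HM HN Hpow.
apply ln_increasing in Hpow; [| now apply pow_lt].
rewrite !ln_pow, plus_INR in Hpow by assumption.
simpl INR in Hpow; lra.
Qed.

Lemma ln_gap_of_quadratic_bounds q M N :
  0 < q -> q * (q + 2) <= 4 * N -> 2 * (M - N) <= q + 2 -> N < M -> 9 <= N ->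
  q * (ln M - ln N) < ln N.
Proof.
intros Hq Hlow Hdiff HNM HN9.
assert (Hratio : q * ((M - N) / N) <= 2).
{ apply (Rmult_le_reg_r N); [lra |].
  replace (q * ((M - N) / N) * N) with (q * (M - N)) by (field; lra).
  nra. }
pose proof (ln_sub_lt_ratio M N ltac:(lra)).
pose proof (two_le_ln N HN9).
nra.
Qed.

Lemma ln_quarter_sq_gap q : (3 <= q)%nat ->
  INR q * (ln (INR (quarter_sq (q + 2))) - ln (INR (quarter_sq (q + 1))))
  < ln (INR (quarter_sq (q + 1))).
Proof.
intros Hq.
destruct (Nat.eq_dec q 3) as [-> | Hq3].
{ apply (ln_gap_of_pow_lt _ _ 3); simpl; lra. }
destruct (Nat.eq_dec q 4) as [-> | Hq4].
{ apply (ln_gap_of_pow_lt _ _ 4); simpl; lra. }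
pose proof (quarter_sq_lower (q + 1)) as Hlow.
pose proof (quarter_sq_succ (q + 1)) as Hsucc.
replace (q + 1 + 1)%nat with (q + 2)%nat in Hsucc by lia.
pose proof (Nat.Div0.mul_div_le (q + 2) 2) as Hhalf.
set (N := quarter_sq (q + 1)) in *; set (M := quarter_sq (q + 2)) in *.
assert (Hquad : (q * (q + 2) <= 4 * N)%nat) by nia.
assert (Hdiff : (2 * M <= N + N + q + 2)%nat) by lia.
assert (HNM : (N < M)%nat) by (assert (1 <= (q + 2) / 2)%nat by
  (apply Nat.div_le_lower_bound; lia); lia).
assert (HN9 : (9 <= N)%nat) by nia.
apply le_INR in Hquad, Hdiff, HN9; apply lt_INR in HNM.
rewrite !mult_INR, !plus_INR in Hquad; rewrite !mult_INR, !plus_INR in Hdiff.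
simpl INR in *.
apply ln_gap_of_quadratic_bounds; [apply lt_0_INR; lia | nra | lra | lra | lra].
Qed.

Lemma cq_pred q : (1 <= q)%nat -> cq (q - 1) = sqrt (INR (quarter_sq (q + 1))).
Proof. intros Hq; unfold cq; now replace (q - 1 + 2)%nat with (q + 1)%nat by lia. Qed.

Lemma cq_log_gap q : (3 <= q)%nat ->
  ln (cq (q - 1)) < ln (cq q) /\
  INR q * (ln (cq q) - ln (cq (q - 1))) < ln (cq (q - 1)).
Proof.
intros Hq.
rewrite cq_pred by lia; unfold cq; fold (quarter_sq (q + 2)).
pose proof (quarter_sq_pos (q + 1) ltac:(lia)) as HN.
pose proof (quarter_sq_pos (q + 2) ltac:(lia)) as HM.
rewrite !ln_sqrt by assumption.
assert (HNM : INR (quarter_sq (q + 1)) < INR (quarter_sq (q + 2))).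
{ apply lt_INR; replace (q + 2)%nat with (q + 1 + 1)%nat by lia.
  apply quarter_sq_lt_succ; lia. }
pose proof (ln_increasing _ _ HN HNM).
pose proof (ln_quarter_sq_gap q Hq).
split; [lra |].
set (lnM := ln (INR (quarter_sq (q + 2)))) in *.
set (lnN := ln (INR (quarter_sq (q + 1)))) in *.
replace (INR q * (lnM / 2 - lnN / 2)) with (INR q * (lnM - lnN) / 2) by field.
lra.
Qed.

Lemma affine_ratio_decreasing X a b s t :
  0 < X + s -> s < t -> X * (a - b) < b ->
  (t * a + (1 - t) * b) / (X + t) < (s * a + (1 - s) * b) / (X + s).
Proof.
intros Hs Hst Hab.
assert (Hcross : (t * a + (1 - t) * b) * (X + s) < (s * a + (1 - s) * b) * (X + t)).
{ assert (0 < (t - s) * (b - X * (a - b))) by (apply Rmult_lt_0_compat; lra).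
  nra. }
apply (Rmult_lt_reg_r ((X + s) * (X + t))); [apply Rmult_lt_0_compat; lra |].
replace ((t * a + (1 - t) * b) / (X + t) * ((X + s) * (X + t)))
  with ((t * a + (1 - t) * b) * (X + s)) by (field; lra).
replace ((s * a + (1 - s) * b) / (X + s) * ((X + s) * (X + t)))
  with ((s * a + (1 - s) * b) * (X + t)) by (field; lra).
exact Hcross.
Qed.

Lemma Rpower_mix_decreasing a b Q r s t :
  0 < a -> 0 < b -> 0 < Q + s - r -> s < t -> (Q - r) * (ln a - ln b) < ln b ->
  Rpower (Rpower a t * Rpower b (1 - t)) (1 / (Q + t - r))
  < Rpower (Rpower a s * Rpower b (1 - s)) (1 / (Q + s - r)).
Proof.
intros Ha Hb Hs Hst Hab.
unfold Rpower at 1 4.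
apply exp_increasing.
rewrite !ln_mult, !ln_Rpower by apply exp_pos.
replace (Q + t - r) with (Q - r + t) by ring.
replace (Q + s - r) with (Q - r + s) by ring.
replace (1 / (Q - r + t) * (t * ln a + (1 - t) * ln b))
  with ((t * ln a + (1 - t) * ln b) / (Q - r + t)) by (unfold Rdiv; ring).
replace (1 / (Q - r + s) * (s * ln a + (1 - s) * ln b))
  with ((s * ln a + (1 - s) * ln b) / (Q - r + s)) by (unfold Rdiv; ring).
apply affine_ratio_decreasing; lra.
Qed.

Lemma cq_pos q : 0 < cq q.
Proof. apply sqrt_lt_R0, quarter_sq_pos; lia. Qed.

Theorem corollary2p13 (q : nat) (r : R) :
  (3 <= q)%nat -> 0 <= r <= 1 ->
  forall s t : R, 0 <= s <= 1 -> 0 <= t <= 1 -> s < t ->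
    Fqr q r t < Fqr q r s.
Proof.
intros Hq Hr s t Hs Ht Hst.
assert (Hq3 : 3 <= INR q) by (apply (le_INR 3) in Hq; simpl in Hq; lra).
destruct (cq_log_gap q Hq) as [Hlt Hgap].
apply Rpower_mix_decreasing; [apply cq_pos | apply cq_pos | lra | exact Hst |].
apply (Rle_lt_trans _ (INR q * (ln (cq q) - ln (cq (q - 1))))); [| exact Hgap].
apply Rmult_le_compat_r; lra.
Qed.
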